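(* Let $H$ be a connected, simply connected real Lie group whose Lie algebra $\mathfrak h=(V,[\cdot,\cdot]_{\mathfrak h})$ is nilpotent of class at most $2$. Then the Lie algebra morphism $\psi: \mathfrak{aff}(\mathfrak h)\to\mathfrak{aff}(V)$, $\psi(x,D) = (x, D+\tfrac12\mathrm{ad}^{\mathfrak h}_x)$, is an algebraic morphism of algebraic Lie algebras.
   Context: A simply connected nilpotent Lie group $H$ has a unique structure of unipotent real linear algebraic group, $\mathrm{Aut}(H)\cong\mathrm{Aut}(\mathfrak h)$ is a linear algebraic group, and hence $\mathrm{Aff}(H)=H\rtimes\mathrm{Aut}(H)$ (and likewise $\mathrm{Aff}(V)=V\rtimes \mathrm{GL}(V)$ for $V$ abelian) is a real linear algebraic group; $\mathfrak{aff}(\mathfrak h)=\mathfrak h\rtimes\mathrm{Der}(\mathfrak h)$ and $\mathfrak{aff}(V)=V\rtimes\mathfrak{gl}(V)$ are their Lie algebras. An algebraic Lie algebra is the Lie algebra of a real linear algebraic group, and a morphism of algebraic Lie algebras is called algebraic if it is the differential of an algebraic morphism (a group morphism given by polynomial coordinate functions) of the corresponding linear algebraic groups. *)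

From HB Require Import structures.
From mathcomp Require Import all_boot all_order all_algebra.
From mathcomp Require Import all_classical all_reals all_analysis.
Set Implicit Arguments. Unset Strict Implicit. Unset Printing Implicit Defensive.
Import Order.TTheory GRing.Theory Num.Theory.
Import numFieldNormedType.Exports.
Local Open Scope ring_scope.

(* The underlying vector space V = R^n is represented by column vectors 'cV[R]_n;
   endomorphisms of V are n x n matrices acting on the left (A *m v). *)
Notation vec R n := 'cV[R]_n.
Notation mat R n := 'M[R]_n.

Section Defs.
Variables (R : realType) (n : nat).
Implicit Types (x y z : vec R n) (A B D E : mat R n).

Definition is_lie_bracket (br : vec R n -> vec R n -> vec R n) : Prop :=
  [/\ (forall a x y z, br (a *: x + y) z = a *: br x z + br y z),
      (forall a x y z, br x (a *: y + z) = a *: br x y + br x z),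
      (forall x, br x x = 0) &
      (forall x y z, br x (br y z) + br y (br z x) + br z (br x y) = 0)].

Definition nilpotent_class_le2 (br : vec R n -> vec R n -> vec R n) : Prop :=
  forall x y z, br (br x y) z = 0.

Definition ad (br : vec R n -> vec R n -> vec R n) x : mat R n :=
  \matrix_(i, j) (br x (delta_mx j 0)) i 0.

Definition is_der (br : vec R n -> vec R n -> vec R n) D : Prop :=
  forall x y, D *m br x y = br (D *m x) y + br x (D *m y).

Definition is_aut (br : vec R n -> vec R n -> vec R n) A : Prop :=
  A \in unitmx /\ forall x y, A *m br x y = br (A *m x) (A *m y).

(* The simply connected group H, in exponential coordinates (H = V as a
   manifold); for class <= 2 the BCH product is x * y = x + y + 1/2 [x,y]. *)
Definition mulH (br : vec R n -> vec R n -> vec R n) x y : vec R n := x + y + 2^-1 *: br x y.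

(* Aff(H) = H x| Aut(H), Aut(H) = Aut(h); elements are pairs (v, A),
   acting on H by w |-> v * A w. *)
Definition in_AffH (br : vec R n -> vec R n -> vec R n) (g : vec R n * mat R n) : Prop := is_aut br g.2.
Definition mulAffH (br : vec R n -> vec R n -> vec R n) (g h : vec R n * mat R n) : vec R n * mat R n :=
  (mulH br g.1 (g.2 *m h.1), g.2 *m h.2).

(* Aff(V) = V x| GL(V), acting on V by w |-> v + A w. *)
Definition in_AffV (g : vec R n * mat R n) : Prop := g.2 \in unitmx.
Definition mulAffV (g h : vec R n * mat R n) : vec R n * mat R n :=
  (g.1 + g.2 *m h.1, g.2 *m h.2).

Definition in_affh (br : vec R n -> vec R n -> vec R n) (X : vec R n * mat R n) : Prop := is_der br X.2.
Definition lie_affh (br : vec R n -> vec R n -> vec R n) (X Y : vec R n * mat R n) : vec R n * mat R n :=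
  (br X.1 Y.1 + X.2 *m Y.1 - Y.2 *m X.1, X.2 *m Y.2 - Y.2 *m X.2).
Definition lie_affV (X Y : vec R n * mat R n) : vec R n * mat R n :=
  (X.2 *m Y.1 - Y.2 *m X.1, X.2 *m Y.2 - Y.2 *m X.2).

Definition psi (br : vec R n -> vec R n -> vec R n) (X : vec R n * mat R n) : vec R n * mat R n :=
  (X.1, X.2 + 2^-1 *: ad br X.1).

Inductive polyfun : (vec R n * mat R n -> R) -> Prop :=
| pf_const c : polyfun (fun _ => c)
| pf_vcoord i : polyfun (fun g => g.1 i 0)
| pf_mcoord i j : polyfun (fun g => g.2 i j)
| pf_add f h : polyfun f -> polyfun h -> polyfun (fun g => f g + h g)
| pf_mul f h : polyfun f -> polyfun h -> polyfun (fun g => f g * h g).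

(* Phi : Aff(H) -> Aff(V) is an algebraic morphism with differential dphi:
   a group morphism Aff(H) -> Aff(V) whose coordinate functions are
   (restrictions to Aff(H) of) polynomials, and whose differential at the
   identity (0, 1) in the direction of any X in aff(h) is dphi X. *)
Definition algebraic_morphism_with_differential br
    (Phi : vec R n * mat R n -> vec R n * mat R n)
    (dphi : vec R n * mat R n -> vec R n * mat R n) : Prop :=
  [/\ (forall g, in_AffH br g -> in_AffV (Phi g)),
      (forall g h, in_AffH br g -> in_AffH br h ->
         Phi (mulAffH br g h) = mulAffV (Phi g) (Phi h)) &
      exists (Pv : 'I_n -> vec R n * mat R n -> R)
             (PM : 'I_n -> 'I_n -> vec R n * mat R n -> R),
        [/\ (forall i, polyfun (Pv i)),
            (forall i j, polyfun (PM i j)),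
            (forall g, in_AffH br g ->
               (forall i, (Phi g).1 i 0 = Pv i g) /\
               (forall i j, (Phi g).2 i j = PM i j g)),
            (forall X, in_affh br X -> forall i,
               is_derive (0 : R) (1 : R)
                 (fun t : R => Pv i (t *: X.1, 1%:M + t *: X.2))
                 ((dphi X).1 i 0)) &
            (forall X, in_affh br X -> forall i j,
               is_derive (0 : R) (1 : R)
                 (fun t : R => PM i j (t *: X.1, 1%:M + t *: X.2))
                 ((dphi X).2 i j))]].

Definition algebraic_lie_morphism br
    (dphi : vec R n * mat R n -> vec R n * mat R n) : Prop :=
  exists Phi, algebraic_morphism_with_differential br Phi dphi.

End Defs.

From HB Require Import structures.
From mathcomp Require Import all_boot all_order all_algebra.
From mathcomp Require Import all_classical all_reals all_analysis.
From mathcomp Require Import ring.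
Set Implicit Arguments. Unset Strict Implicit. Unset Printing Implicit Defensive.
Import Order.TTheory GRing.Theory Num.Theory.
Local Open Scope ring_scope.

(* In class 2 every product ad_x ad_y vanishes, so twist x := 1 + 1/2 ad_x
   satisfies twist x * twist y = twist (x + y), is invertible, and ignores
   brackets. With A ad_u = ad_(A u) A for automorphisms A, this makes
   Phi (v, A) := (v, twist v * A) a group morphism Aff(H) -> Aff(V); it is
   polynomial, and twist (t x) (1 + t D) = 1 + t (D + 1/2 ad_x) + O(t^2)
   shows that its differential is psi. *)

Lemma mx_ext_mulv (R : pzSemiRingType) (n : nat) (A B : 'M[R]_n) :
  (forall v : 'cV[R]_n, A *m v = B *m v) -> A = B.
Proof.
move=> eqAB; apply/matrixP => i j.
have := congr1 (fun M : 'cV[R]_n => M i 0) (eqAB (delta_mx j 0)).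
by rewrite -!colE !mxE.
Qed.

Lemma col_sum_delta (R : pzSemiRingType) (n : nat) (v : 'cV[R]_n) :
  v = \sum_j v j 0 *: delta_mx j 0.
Proof.
by rewrite {1}(matrix_sum_delta v); apply: eq_bigr => j _; rewrite big_ord1.
Qed.

Lemma polyfun_sum (R : realType) (n : nat) (I : Type) (r : seq I)
    (F : I -> 'cV[R]_n * 'M[R]_n -> R) :
  (forall k, polyfun (F k)) -> polyfun (fun g => \sum_(k <- r) F k g).
Proof.
move=> polyF; elim: r => [|k r IH].
  under boolp.eq_fun do rewrite big_nil; exact: pf_const.
under boolp.eq_fun do rewrite big_cons; exact: pf_add.
Qed.

Section LieBracket.
Variables (R : realType) (n : nat) (br : 'cV[R]_n -> 'cV[R]_n -> 'cV[R]_n).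
Hypothesis br_lie : is_lie_bracket br.

Lemma brDl x y z : br (x + y) z = br x z + br y z.
Proof. by case: br_lie => linl _ _ _; rewrite -{1}[x]scale1r linl scale1r. Qed.

Lemma brDr x y z : br x (y + z) = br x y + br x z.
Proof. by case: br_lie => _ linr _ _; rewrite -{1}[y]scale1r linr scale1r. Qed.

Lemma br0l x : br 0 x = 0.
Proof. by apply: (addrI (br 0 x)); rewrite -brDl !addr0. Qed.

Lemma br0r x : br x 0 = 0.
Proof. by apply: (addrI (br x 0)); rewrite -brDr !addr0. Qed.

Lemma brZl a x y : br (a *: x) y = a *: br x y.
Proof. by case: br_lie => linl _ _ _; rewrite -[a *: x]addr0 linl br0l addr0. Qed.

Lemma brZr a x y : br x (a *: y) = a *: br x y.
Proof. by case: br_lie => _ linr _ _; rewrite -[a *: y]addr0 linr br0r addr0. Qed.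

Lemma br_anticomm x y : br y x = - br x y.
Proof.
case: br_lie => _ _ brxx _; apply/eqP; rewrite -addr_eq0.
by have := brxx (x + y); rewrite brDl !brDr !brxx add0r addr0 addrC => ->.
Qed.

Lemma br_suml (I : Type) (r : seq I) (a : I -> R) (e : I -> 'cV[R]_n) y :
  br (\sum_(k <- r) a k *: e k) y = \sum_(k <- r) a k *: br (e k) y.
Proof.
by elim: r => [|k r IH]; rewrite ?big_nil ?br0l // !big_cons brDl brZl IH.
Qed.

Lemma br_sumr (I : Type) (r : seq I) (a : I -> R) (e : I -> 'cV[R]_n) x :
  br x (\sum_(k <- r) a k *: e k) = \sum_(k <- r) a k *: br x (e k).
Proof.
by elim: r => [|k r IH]; rewrite ?big_nil ?br0r // !big_cons brDr brZr IH.
Qed.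

Lemma ad_mulmx x v : ad br x *m v = br x v.
Proof.
rewrite {2}(col_sum_delta v) br_sumr; apply/matrixP => i k.
rewrite (ord1 k) !mxE summxE; apply: eq_bigr => j _.
by rewrite !mxE mulrC.
Qed.

Lemma adE x i j :
  ad br x i j = \sum_l x l 0 * br (delta_mx l 0) (delta_mx j 0) i 0.
Proof.
by rewrite mxE {1}(col_sum_delta x) br_suml summxE; apply: eq_bigr => l _; rewrite !mxE.
Qed.

Lemma ad0 : ad br 0 = 0.
Proof. by apply: mx_ext_mulv => v; rewrite ad_mulmx br0l mul0mx. Qed.

Lemma adD x y : ad br (x + y) = ad br x + ad br y.
Proof. by apply: mx_ext_mulv => v; rewrite mulmxDl !ad_mulmx brDl. Qed.

Lemma adZ a x : ad br (a *: x) = a *: ad br x.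
Proof. by apply: mx_ext_mulv => v; rewrite -scalemxAl !ad_mulmx brZl. Qed.

Lemma adN x : ad br (- x) = - ad br x.
Proof. by rewrite -scaleN1r adZ scaleN1r. Qed.

Lemma der_mul_ad D y :
  is_der br D -> D *m ad br y = ad br (D *m y) + ad br y *m D.
Proof. by move=> derD; apply: mx_ext_mulv => v; rewrite mulmxDl -!mulmxA !ad_mulmx derD. Qed.

Lemma aut_mul_ad A u : is_aut br A -> A *m ad br u = ad br (A *m u) *m A.
Proof. by case=> _ autA; apply: mx_ext_mulv => v; rewrite -!mulmxA !ad_mulmx autA. Qed.

Definition twist x : 'M[R]_n := 1%:M + 2^-1 *: ad br x.

Lemma aut_mul_twist A u : is_aut br A -> A *m twist u = twist (A *m u) *m A.
Proof.
move=> autA; rewrite /twist mulmxDr mulmxDl mulmx1 mul1mx -scalemxAr -scalemxAl.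
by rewrite aut_mul_ad.
Qed.

Definition Phi (g : 'cV[R]_n * 'M[R]_n) : 'cV[R]_n * 'M[R]_n :=
  (g.1, twist g.1 *m g.2).

Lemma polyfun_Phi_mx i j : polyfun (fun g => (Phi g).2 i j).
Proof.
under boolp.eq_fun do rewrite mxE.
apply: polyfun_sum => k; apply: pf_mul; last exact: pf_mcoord.
under boolp.eq_fun do rewrite /twist mxE [X in _ + X]mxE adE.
apply: pf_add; first exact: pf_const.
apply: pf_mul; first exact: pf_const.
by apply: polyfun_sum => l; apply: pf_mul; [exact: pf_vcoord | exact: pf_const].
Qed.

Lemma twist_line x D (t : R) :
  twist (t *: x) *m (1%:M + t *: D) =
  1%:M + t *: (D + 2^-1 *: ad br x) + (t * t) *: (2^-1 *: (ad br x *m D)).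
Proof.
rewrite /twist adZ mulmxDl !mulmxDr !mul1mx mulmx1 -!scalemxAl -!scalemxAr.
move: (ad br x *m D) (ad br x) => M N.
by apply/matrixP => i j; rewrite !mxE; ring.
Qed.

Lemma Phi_line_entry x D (t : R) i j :
  (Phi (t *: x, 1%:M + t *: D)).2 i j =
  (1%:M : 'M[R]_n) i j + t * (D + 2^-1 *: ad br x) i j +
    (t * t) * (2^-1 *: (ad br x *m D)) i j.
Proof.
rewrite /Phi /= twist_line.
move: (D + 2^-1 *: ad br x) (2^-1 *: (ad br x *m D)) => M N.
by rewrite mxE [X in X + _]mxE [X in _ + X + _]mxE [X in _ + X]mxE.
Qed.

Section Class2.
Hypothesis br_class2 : nilpotent_class_le2 br.

Lemma br_br_r x y z : br x (br y z) = 0.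
Proof. by rewrite br_anticomm br_class2 oppr0. Qed.

Lemma ad_br x y : ad br (br x y) = 0.
Proof. by apply: mx_ext_mulv => v; rewrite ad_mulmx br_class2 mul0mx. Qed.

Lemma ad_mul_ad x y : ad br x *m ad br y = 0.
Proof. by apply: mx_ext_mulv => v; rewrite -mulmxA !ad_mulmx br_br_r mul0mx. Qed.

Lemma psi_lie_morphism X Y : in_affh br X -> in_affh br Y ->
  psi br (lie_affh br X Y) = lie_affV (psi br X) (psi br Y).
Proof.
case: X => x D; case: Y => y E; rewrite /in_affh /= => derD derE.
rewrite /psi /lie_affh /lie_affV /=; congr pair.
  rewrite !mulmxDl -!scalemxAl !ad_mulmx (br_anticomm x y) scalerN.
  move: (br x y) (D *m y) (E *m x) => w a b.
  by apply/matrixP => i j; rewrite !mxE; field.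
rewrite !mulmxDl !mulmxDr -!scalemxAl -!scalemxAr !scalerA !ad_mul_ad !scaler0 !addr0.
rewrite (der_mul_ad y derD) (der_mul_ad x derE) !adD adN ad_br.
move: (D *m E) (E *m D) (ad br (D *m y)) (ad br (E *m x)) (ad br x *m E)
  (ad br y *m D) => P Q a b c d.
by apply/matrixP => i j; rewrite !mxE; ring.
Qed.

Lemma twist_mul x y : twist x *m twist y = twist (x + y).
Proof.
rewrite /twist mulmxDl !mulmxDr !mul1mx mulmx1 -scalemxAl -scalemxAr ad_mul_ad.
by rewrite !scaler0 addr0 adD scalerDr addrA (addrAC _ (_ *: ad br y)).
Qed.

Lemma twist_unit x : twist x \in unitmx.
Proof.
have: twist x *m twist (- x) = 1%:M by rewrite twist_mul subrr /twist ad0 scaler0 addr0.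
by case/mulmx1_unit.
Qed.

Lemma twistD_br x y z : twist (x + 2^-1 *: br y z) = twist x.
Proof. by rewrite /twist adD adZ ad_br !scaler0 addr0. Qed.

Lemma Phi_AffV g : in_AffH br g -> in_AffV (Phi g).
Proof. by case: g => v A [unitA _]; rewrite /in_AffV unitmx_mul twist_unit. Qed.

Lemma Phi_mul g h : in_AffH br g -> in_AffH br h ->
  Phi (mulAffH br g h) = mulAffV (Phi g) (Phi h).
Proof.
case: g h => v A [u B] autA _; rewrite /Phi /mulAffH /mulAffV /mulH /=.
congr pair; first by rewrite -mulmxA /twist mulmxDl mul1mx -scalemxAl ad_mulmx addrA.
by rewrite twistD_br -twist_mul [RHS]mulmxA -(mulmxA _ A) (aut_mul_twist _ autA) !mulmxA.
Qed.

End Class2.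
End LieBracket.

Lemma is_derive_quadratic (R : realType) (a b c : R) :
  is_derive (0 : R) (1 : R) (fun t : R => a + t * b + (t * t) * c) b.
Proof.
suff: is_derive (0 : R) (1 : R) (cst a + id * cst b + (id * id) * cst c) b by [].
apply: is_derive_eq.
by rewrite !scaler0 !add0r scale0r addr0 scaler0 addr0; exact: mulr1.
Qed.

Theorem lemma4 (R : realType) (n : nat)
    (br : 'cV[R]_n -> 'cV[R]_n -> 'cV[R]_n) :
  is_lie_bracket br -> nilpotent_class_le2 br ->
  (forall X Y, in_affh br X -> in_affh br Y ->
     psi br (lie_affh br X Y) = lie_affV (psi br X) (psi br Y)) /\
  algebraic_lie_morphism br (psi br).
Proof.
move=> br_lie br_class2; split; first exact: psi_lie_morphism.
exists (Phi br); split; [exact: Phi_AffV | exact: Phi_mul |].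
exists (fun i g => (Phi br g).1 i 0), (fun i j g => (Phi br g).2 i j); split => //.
- exact: pf_vcoord.
- exact: polyfun_Phi_mx.
- move=> [x D] _ i /=.
  have -> : (fun t : R => (t *: x) i 0) = (fun t => 0 + t * x i 0 + (t * t) * 0).
    by apply: boolp.funext => t; rewrite mxE; ring.
  exact: is_derive_quadratic.
- move=> [x D] _ i j /=.
  under boolp.eq_fun do rewrite (Phi_line_entry br_lie).
  exact: is_derive_quadratic.
Qed.
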